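(* Let $T\in\mathcal B(\mathcal H)$ be left-invertible, with Cauchy dual $T'=T(T^*T)^{-1}$. The following are equivalent: (i) $T$ is a $2$-isometry and $T^*T(\ker T^* )\subseteq\ker T^*$; (ii) $T$ is a $2$-isometry and $T^*T(T(\mathcal H))\subseteq T(\mathcal H)$; (iii) $T'-2T+T^*T^2=0$; (iv) $(T^*T^2T^*-2TT^*+I)T=0$; (v) $T'(T^*T-I)=(T^*T-I)T$.
   Context: A $2$-isometry is $T$ with $I-2T^*T+T^{*2}T^2=0$. *)

(* Abstract (pre-)Hilbert-space setting: a vector space V over
   a numeric closed field C (e.g. the complex numbers) with a positive definite
   Hermitian inner product (linear in the first argument), and linear operators. *)
From HB Require Import structures.
From mathcomp Require Import all_boot all_order all_algebra.
Set Implicit Arguments. Unset Strict Implicit. Unset Printing Implicit Defensive.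
Import Order.TTheory GRing.Theory Num.Theory.
Local Open Scope ring_scope.

Section Defs.
Variables (C : numClosedFieldType) (V : lmodType C).

Definition inner_product (ip : V -> V -> C) : Prop :=
  [/\ forall (a : C) (x y z : V), ip (a *: x + y) z = a * ip x z + ip y z,
      forall x y : V, ip y x = (ip x y)^*,
      forall x : V, 0 <= ip x x &
      forall x : V, ip x x = 0 -> x = 0].

Definition is_adjoint (ip : V -> V -> C) (T Ts : V -> V) : Prop :=
  forall x y : V, ip (T x) y = ip x (Ts y).

Definition left_invertible (T : V -> V) : Prop :=
  exists L : {linear V -> V}, forall x, L (T x) = x.

Definition two_isometry (T Ts : V -> V) : Prop :=
  forall x : V, x - (Ts (T x)) *+ 2 + Ts (Ts (T (T x))) = 0.

(* Cauchy dual T' = T (T^*T)^{-1}, where S = (T^*T)^{-1} *)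
Definition cauchy_dual (T S : V -> V) : V -> V := fun x => T (S x).

Definition kerO (f : V -> V) : V -> Prop := fun x => f x = 0.
Definition ranO (f : V -> V) : V -> Prop := fun x => exists y, x = f y.

Definition maps_into (A : V -> V) (P : V -> Prop) : Prop :=
  forall x, P x -> P (A x).

End Defs.

From HB Require Import structures.
From mathcomp Require Import all_boot all_order all_algebra.
Import Order.TTheory GRing.Theory Num.Theory.
Set Implicit Arguments. Unset Strict Implicit. Unset Printing Implicit Defensive.
Local Open Scope ring_scope.

(* With A := T^*T invertible, T S T^* is the orthogonal projection onto ran T, so
   ran T and ker T^* are orthogonal complements; as A is self-adjoint, it leaves
   ker T^* invariant iff it leaves ran T invariant, which gives (i) <-> (ii).
   The operator D := T' - 2T + T^*T^2 satisfies T^*D = I - 2T^*T + T^*^2T^2,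
   and D x lies in ran T as soon as T^*T^2 x does; since ker T^* meets ran T
   only in 0, (ii) is equivalent to D = 0, i.e. to (iii). Finally (iv) is (iii)
   at the points T^*T x, and (v) is pointwise equivalent to (iii) because
   T' T^*T = T. *)

Lemma sub_mulr2n_add_eq0 (M : zmodType) (a b c : M) :
  (b - a *+ 2 + c == 0) = (a - b == c - a).
Proof.
by rewrite addr_eq0 eq_sym eqr_oppLR opprB [RHS]eq_sym subr_eq [a - b + a]addrAC -mulr2n.
Qed.

Section CauchyDual.
Variables (C : numClosedFieldType) (V : lmodType C) (ip : V -> V -> C).
Hypothesis ip_inner : inner_product ip.

Lemma ip0l z : ip 0 z = 0.
Proof.
case: ip_inner => ipDl _ _ _; apply: (addrI (ip 0 z)).
by rewrite addr0 -{1}[ip 0 z]mul1r -ipDl scale1r addr0.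
Qed.

Lemma ip0r z : ip z 0 = 0.
Proof. by case: ip_inner => _ ipC _ _; rewrite ipC ip0l conjC0. Qed.

Lemma ipBl x y z : ip (x - y) z = ip x z - ip y z.
Proof.
case: ip_inner => ipDl _ _ _.
by rewrite addrC -scaleN1r ipDl mulN1r addrC.
Qed.

Lemma ip_eq0 x : ip x x = 0 -> x = 0.
Proof. by case: ip_inner => _ _ _ /(_ x). Qed.

Variables (T Ts : {linear V -> V}).
Hypothesis adjT : is_adjoint ip T Ts.

Lemma adjoint_ipl y x : ip (Ts y) x = ip y (T x).
Proof. by case: ip_inner => _ ipC _ _; rewrite ipC -adjT -ipC. Qed.

Lemma ker_adjoint_orthl k w : Ts k = 0 -> ip k (T w) = 0.
Proof. by move=> k0; rewrite -adjoint_ipl k0 ip0l. Qed.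

Lemma ker_adjoint_orthr k w : Ts k = 0 -> ip (T w) k = 0.
Proof. by move=> k0; rewrite adjT k0 ip0r. Qed.

Lemma gram_invariant_ker_of_range :
  maps_into (fun x => Ts (T x)) (ranO T) -> maps_into (fun x => Ts (T x)) (kerO Ts).
Proof.
move=> ranA y; rewrite /kerO /= => y0; apply: ip_eq0.
set z := Ts (Ts (T y)); rewrite {1}adjoint_ipl adjoint_ipl adjT.
have [u ->] := ranA (T z) (ex_intro _ z erefl).
exact: ker_adjoint_orthl.
Qed.

Variable S : V -> V.
Hypotheses (gramK : cancel (fun x => Ts (T x)) S)
           (gramVK : cancel S (fun x => Ts (T x))).

Lemma gram_invB a b : S (a - b) = S a - S b.
Proof. by apply: (can_inj gramK); rewrite /= !raddfB /= !gramVK. Qed.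

Lemma gram_inv0 : S 0 = 0.
Proof. by have := gram_invB 0 0; rewrite subrr => ->; rewrite subrr. Qed.

Lemma ker_adjoint_range_eq0 e : Ts e = 0 -> ranO T e -> e = 0.
Proof.
move=> e0 [u eu]; have u0 : u = 0 by rewrite -(gramK u) /= -eu e0 gram_inv0.
by rewrite eu u0 raddf0.
Qed.

Lemma range_of_orth_ker_adjoint w :
  (forall k, Ts k = 0 -> ip w k = 0) -> ranO T w.
Proof.
(* w - T S T^* w lies in ker T^* and is orthogonal to itself. *)
move=> orth_w; exists (S (Ts w)).
set k := w - T (S (Ts w)).
have k0 : Ts k = 0 by rewrite /k raddfB /= gramVK subrr.
suff : k = 0 by move/eqP; rewrite subr_eq0 => /eqP.
by apply: ip_eq0; rewrite {1}/k ipBl orth_w // ker_adjoint_orthr // subrr.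
Qed.

Lemma gram_invariant_range_of_ker :
  maps_into (fun x => Ts (T x)) (kerO Ts) -> maps_into (fun x => Ts (T x)) (ranO T).
Proof.
move=> kerA _ [x ->]; apply: range_of_orth_ker_adjoint => k k0 /=.
by rewrite adjoint_ipl adjT ker_adjoint_orthr //; apply: kerA.
Qed.

Definition cauchy_defect x := cauchy_dual T S x - T x *+ 2 + Ts (T (T x)).

Lemma adjoint_cauchy_defect x :
  Ts (cauchy_defect x) = x - Ts (T x) *+ 2 + Ts (Ts (T (T x))).
Proof. by rewrite /cauchy_defect /cauchy_dual raddfD raddfB raddfMn /= gramVK. Qed.

Lemma cauchy_defect_eq0 x :
  cauchy_defect x = 0 <-> Ts (T (T x)) = T (x *+ 2 - S x).
Proof.
rewrite /cauchy_defect /cauchy_dual (raddfB T) (raddfMn T).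
split=> [/eqP | ->]; last by apply/eqP; rewrite addrC addr_eq0 opprB.
by rewrite addrC addr_eq0 opprB => /eqP.
Qed.

Lemma cauchy_defect_range x :
  ranO T (Ts (T (T x))) -> ranO T (cauchy_defect x).
Proof.
move=> [u eu]; exists (S x - x *+ 2 + u).
by rewrite /cauchy_defect /cauchy_dual eu (raddfD T) (raddfB T) (raddfMn T).
Qed.

Lemma two_isometry_invariant_rangeE :
  two_isometry T Ts /\ maps_into (fun x => Ts (T x)) (ranO T) <->
  forall x, cauchy_defect x = 0.
Proof.
split=> [[iso ranA] x | defect0].
  apply: ker_adjoint_range_eq0; first by rewrite adjoint_cauchy_defect.
  by apply/cauchy_defect_range/ranA; exists x.
split=> [x | _ [x ->]]; first by rewrite -adjoint_cauchy_defect defect0 raddf0.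
by exists (x *+ 2 - S x); apply/cauchy_defect_eq0.
Qed.

Lemma cauchy_defect_gram y :
  cauchy_defect (Ts (T y)) = Ts (T (T (Ts (T y)))) - T (Ts (T y)) *+ 2 + T y.
Proof. by rewrite /cauchy_defect /cauchy_dual gramK addrC (addrC (T y)) addrA. Qed.

Lemma cauchy_defect_eq0_gram :
  (forall x, cauchy_defect x = 0) <->
  forall y, Ts (T (T (Ts (T y)))) - T (Ts (T y)) *+ 2 + T y = 0.
Proof.
by split=> defect0 y; rewrite -?cauchy_defect_gram // -(gramVK y) cauchy_defect_gram.
Qed.

Lemma cauchy_dual_gramB x :
  cauchy_dual T S (Ts (T x) - x) = T x - cauchy_dual T S x.
Proof. by rewrite /cauchy_dual gram_invB gramK (raddfB T). Qed.

Lemma cauchy_defect_eq0_dual x :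
  cauchy_defect x = 0 <-> cauchy_dual T S (Ts (T x) - x) = Ts (T (T x)) - T x.
Proof.
rewrite cauchy_dual_gramB /cauchy_defect.
by split=> /eqP; [rewrite sub_mulr2n_add_eq0 | rewrite -sub_mulr2n_add_eq0] => /eqP.
Qed.

End CauchyDual.

Theorem mainTheorem3 (C : numClosedFieldType) (V : lmodType C)
    (ip : V -> V -> C) (T Ts : {linear V -> V}) (S : V -> V) :
  inner_product ip ->
  is_adjoint ip T Ts ->
  left_invertible T ->
  (* S = (T^*T)^{-1} *)
  cancel (fun x => Ts (T x)) S ->
  cancel S (fun x => Ts (T x)) ->
  let T' := cauchy_dual T S in
  [<-> (* (i) *)   two_isometry T Ts /\
                   maps_into (fun x => Ts (T x)) (kerO Ts);
       (* (ii) *)  two_isometry T Ts /\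
                   maps_into (fun x => Ts (T x)) (ranO T);
       (* (iii) T' - 2T + T^*T^2 = 0 *)
                   forall x, T' x - (T x) *+ 2 + Ts (T (T x)) = 0;
       (* (iv) (T^*T^2T^* - 2TT^* + I)T = 0 *)
                   forall x, Ts (T (T (Ts (T x)))) - (T (Ts (T x))) *+ 2 + T x = 0;
       (* (v) T'(T^*T - I) = (T^*T - I)T *)
                   forall x, T' (Ts (T x) - x) = Ts (T (T x)) - T x].
Proof.
move=> ip_inner adjT _ gramK gramVK T'.
have ker_range := gram_invariant_range_of_ker ip_inner adjT gramVK.
have range_ker := gram_invariant_ker_of_range ip_inner adjT.
have ii_iii := two_isometry_invariant_rangeE gramK gramVK.
have iii_iv := cauchy_defect_eq0_gram gramK gramVK.
tfae.
- by move=> [iso /ker_range].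
- by move/ii_iii.
- by move/iii_iv.
- by move=> /iii_iv defect0 x; apply/(cauchy_defect_eq0_dual gramK gramVK).
- move=> dual; have defect0 x : cauchy_defect T Ts S x = 0.
    exact/(cauchy_defect_eq0_dual gramK gramVK).
  by have [iso /range_ker] := ii_iii.2 defect0.
Qed.
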